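(* Let $\mathcal F=(f_t)$ be a continuous flow on a compact metric space $(X,d)$ and let $\nu$ be an $\mathcal F$-invariant Borel probability measure which is almost expansive at scale $\varepsilon$. Let $s>0$ and $\alpha>0$. Then for all sufficiently small $\rho\in(0,\varepsilon/2)$ the following holds. For each $t>0$ let $\mathscr A_t$ be a partition adapted to a $(t,\rho)$-separated set of maximal cardinality, and let $A\subset X$ be a measurable set with $\nu(A)>0$. Then for every $\kappa>0$ there is $t_0$ such that for every $t\ge t_0$ there is a set $U$ which is a union of elements of $\mathscr A_t$ with $\nu(f_{t/2}U\setminus f_{[-3s,3s]}A)<\kappa$ and $\nu(A\setminus f_{t/2}U)<\alpha$.
   Context: $\Gamma_\varepsilon(x)=\{y: d(f_tx,f_ty)<\varepsilon\ \forall t\in\mathbb{R}\}$; $\mathrm{NE}(\varepsilon)=\{x:\Gamma_\varepsilon(x)\not\subset f_{[-s,s]}(x)\text{ for every } s>0\}$, where $f_{[-s,s]}A=\bigcup_{r\in[-s,s]}f_rA$. $\nu$ is almost expansive at scale $\varepsilon$ if $\nu(\mathrm{NE}(\varepsilon))=0$. Bowen ball $B_t(x,\rho)=\{y:d(f_rx,f_ry)<\rho\ \forall r\in[0,t]\}$. Given a $(t,\rho)$-separated set $E$ of maximal cardinality, a partition $\mathscr A$ is adapted to $E$ if for every $A'\in\mathscr A$ there is $x\in E$ with $B_t(x,\rho/2)\subset A'\subset\overline{B_t}(x,\rho)$. *)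

From HB Require Import structures.
From mathcomp Require Import all_boot all_order all_algebra.
From mathcomp Require Import all_classical all_reals all_analysis.
Set Implicit Arguments. Unset Strict Implicit. Unset Printing Implicit Defensive.
Import Order.TTheory GRing.Theory Num.Theory.
Local Open Scope classical_set_scope.
Local Open Scope ring_scope.

Section Defs.
Context {R : realType} {X : Type}.
Variable (dist : X -> X -> R).

Definition is_metric : Prop :=
  (forall x y, dist x y = 0 <-> x = y) /\
  (forall x y, dist x y = dist y x) /\
  (forall x y z, dist x z <= dist x y + dist y z).

Definition mopen (U : set X) : Prop :=
  forall x, U x -> exists2 r : R, 0 < r & [set y | dist x y < r] `<=` U.

Definition mcompact : Prop :=
  forall u : nat -> X, exists phi : nat -> nat,
    (forall n, (phi n < phi n.+1)%N) /\
    exists l : X, forall e : R, 0 < e ->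
      exists N : nat, forall n, (N <= n)%N -> dist (u (phi n)) l < e.

Variable (f : R -> X -> X).

Definition is_cont_flow : Prop :=
  (forall x, f 0 x = x) /\
  (forall s t x, f (s + t) x = f s (f t x)) /\
  (forall t x (e : R), 0 < e -> exists2 del : R, 0 < del &
     forall t' y, `|t' - t| < del -> dist x y < del -> dist (f t x) (f t' y) < e).

Definition flow_tube (s : R) (A : set X) : set X :=
  [set y | exists r : R, -s <= r <= s /\ exists2 a, A a & f r a = y].

Definition Gamma (eps : R) (x : X) : set X :=
  [set y | forall t : R, dist (f t x) (f t y) < eps].

Definition NE (eps : R) : set X :=
  [set x | forall s : R, 0 < s -> ~ (Gamma eps x `<=` flow_tube s [set x])].

Definition bowen (t rho : R) (x : X) : set X :=
  [set y | forall r : R, 0 <= r <= t -> dist (f r x) (f r y) < rho].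

Definition cbowen (t rho : R) (x : X) : set X :=
  [set y | forall r : R, 0 <= r <= t -> dist (f r x) (f r y) <= rho].

Definition separated (t rho : R) (E : set X) : Prop :=
  forall x y, E x -> E y -> x <> y -> ~ bowen t rho x y.

Definition max_separated (t rho : R) (E : set X) : Prop :=
  separated t rho E /\ forall E', separated t rho E' -> card_le E' E.

End Defs.

Section MeasDefs.
Context {R : realType} {disp : measure_display} {X : measurableType disp}.

Definition mpartition (P : set (set X)) : Prop :=
  (forall B, P B -> measurable B) /\
  (forall B C, P B -> P C -> B <> C -> B `&` C = set0) /\
  \bigcup_(B in P) B = setT.

Definition adapted (dist : X -> X -> R) (f : R -> X -> X) (t rho : R)
    (E : set X) (P : set (set X)) : Prop :=
  mpartition P /\
  forall B, P B -> exists2 x, E x &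
    bowen dist f t (rho / 2) x `<=` B /\ B `<=` cbowen dist f t rho x.

(* outer-measure bound: nu^*(S) < c (S need not be measurable a priori) *)
Definition outer_lt (nu : set X -> \bar R) (S : set X) (c : R) : Prop :=
  exists B, [/\ measurable B, S `<=` B & (nu B < c%:E)%E].

End MeasDefs.

(* Let [NE_le s c] be the set of points a for which some y satisfies d(f_t a, f_t y) <= c
   for all t without lying in f_[-s,s] a.  These sets are Borel (countable unions of closed
   sets), shrink with c, and their intersection over c = 1/(n+1) lies in NE(eps); so one of
   them has measure < alpha/2, and we take rho0 = c/2.  Approximate A minus that set from
   inside by a closed K.  By compactness, the points whose orbit stays 2rho-close to the
   orbit of some point of K during [-N, N] accumulate, as N grows, only on f_[-s,s] K; so
   up to measure kappa they lie in f_[-s,s] K once N is large.  For t >= 2N + 1 let U be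
   the union of the cells of the partition that meet f_(-t/2) K.  Cells lie in closed
   Bowen balls of radius rho, so every point of f_(t/2) U stays 2rho-close to the orbit of
   a point of K during [-t/2, t/2]; and f_(t/2) U contains K. *)

From HB Require Import structures.
From mathcomp Require Import all_boot all_order all_algebra.
From mathcomp Require Import all_classical all_reals all_analysis.
From mathcomp Require Import lra.
Import Order.TTheory GRing.Theory Num.Theory.
Import numFieldNormedType.Exports.
Set Implicit Arguments. Unset Strict Implicit.
Local Open Scope classical_set_scope.
Local Open Scope ring_scope.

Definition strict_incr (phi : nat -> nat) := forall n, (phi n < phi n.+1)%N.

Lemma strict_incr_ge phi : strict_incr phi -> forall n, (n <= phi n)%N.
Proof. by move=> H; elim=> // n IH; apply: leq_ltn_trans IH (H n). Qed.

Lemma strict_incr_comp phi psi :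
  strict_incr phi -> strict_incr psi -> strict_incr (phi \o psi).
Proof. by move=> H1 H2 n; exact: (homo_ltn ltn_trans H1 (H2 n)). Qed.

Lemma exists_invSn_lt (R : realType) (e : R) :
  0 < e -> exists N, forall n, (N <= n)%N -> n.+1%:R^-1 < e.
Proof.
move=> e0; exists (Num.truncn e^-1) => n Nn.
have h1 := truncnS_gt e^-1.
have h2 : (Num.truncn e^-1).+1%:R <= n.+1%:R :> R by rewrite ler_nat ltnS.
rewrite -[e]invrK ltf_pV2 ?posrE ?invr_gt0 //; lra.
Qed.

Section Metric.
Context {R : realType} {X : Type} (dist : X -> X -> R).

Definition mcvg (u : nat -> X) (l : X) := forall e, 0 < e ->
  exists N, forall n, (N <= n)%N -> dist (u n) l < e.

Definition mclosed (F : set X) := mopen dist (~` F).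

Lemma mcvg_sub u l phi : mcvg u l -> strict_incr phi -> mcvg (u \o phi) l.
Proof.
move=> H Hp e /H [N HN]; exists N => n Nn /=; apply: HN.
exact: leq_trans Nn (strict_incr_ge Hp n).
Qed.

Lemma mclosed_setU A B :
  mclosed A -> mclosed B -> mclosed (A `|` B).
Proof.
move=> hA hB x /= hx.
have [r1 r10 h1] := hA x (fun h => hx (or_introl h)).
have [r2 r20 h2] := hB x (fun h => hx (or_intror h)).
exists (Num.min r1 r2); first by rewrite lt_min r10 r20.
by move=> y /=; rewrite lt_min => /andP[y1 y2] [/(h1 y y1)|/(h2 y y2)].
Qed.

Lemma mclosed_bigcup_ord (F : nat -> set X) n :
  (forall i, mclosed (F i)) -> mclosed (\bigcup_(i < n) F i).
Proof.
move=> hF; rewrite bigcup_mkord; elim: n => [|n IH].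
  by rewrite big_ord0 => x _; exists 1 => // y _ [].
by rewrite big_ord_recr; apply: mclosed_setU.
Qed.

Lemma mclosed_bigcap (F : nat -> set X) :
  (forall i, mclosed (F i)) -> mclosed (\bigcap_i F i).
Proof.
move=> hF x /= hx.
have [i hi] : exists i, ~ F i x.
  by apply: contrapT => hn; apply: hx => i _; apply: contrapT => h; apply: hn; exists i.
have [r r0 h] := hF i x hi; exists r => // y hy hy'; apply: (h y hy); exact: hy' i I.
Qed.

Hypothesis hm : is_metric dist.

Lemma distxx x : dist x x = 0. Proof. by case: hm => H _; exact: (proj2 (H x x)). Qed.
Lemma distC x y : dist x y = dist y x. Proof. by case: hm => _ []. Qed.
Lemma dist_triangle x y z : dist x z <= dist x y + dist y z.
Proof. by case: hm => _ []. Qed.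
Lemma dist_ge0 x y : 0 <= dist x y.
Proof. by have := dist_triangle x y x; rewrite distxx (distC y x); lra. Qed.
Lemma dist_eq0 x y : dist x y = 0 -> x = y. Proof. by case: hm => H _ /H. Qed.

Lemma mcvg_cst a : mcvg (fun=> a) a.
Proof. by move=> e e0; exists 0%N => n _; rewrite distxx. Qed.

Lemma mcvg_dist_le u v l m (c : R) : mcvg u l -> mcvg v m ->
  (exists N, forall n, (N <= n)%N -> dist (u n) (v n) <= c) -> dist l m <= c.
Proof.
move=> hu hv [N HN]; rewrite leNgt; apply/negP => hlt.
have [N1 HN1] := hu ((dist l m - c) / 2) ltac:(lra).
have [N2 HN2] := hv ((dist l m - c) / 2) ltac:(lra).
pose n := maxn N (maxn N1 N2).
have h1 := HN1 n (leq_trans (leq_maxl N1 N2) (leq_maxr _ _)).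
have h2 := HN2 n (leq_trans (leq_maxr N1 N2) (leq_maxr _ _)).
have h3 := HN n (leq_maxl _ _).
have t1 := dist_triangle l (u n) m; have t2 := dist_triangle (u n) (v n) m.
rewrite (distC l (u n)) in t1; lra.
Qed.

Lemma mcvg_dist_ge u v l m (c : R) : mcvg u l -> mcvg v m ->
  (exists N, forall n, (N <= n)%N -> c <= dist (u n) (v n)) -> c <= dist l m.
Proof.
move=> hu hv [N HN]; rewrite leNgt; apply/negP => hlt.
have [N1 HN1] := hu ((c - dist l m) / 2) ltac:(lra).
have [N2 HN2] := hv ((c - dist l m) / 2) ltac:(lra).
pose n := maxn N (maxn N1 N2).
have h1 := HN1 n (leq_trans (leq_maxl N1 N2) (leq_maxr _ _)).
have h2 := HN2 n (leq_trans (leq_maxr N1 N2) (leq_maxr _ _)).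
have h3 := HN n (leq_maxl _ _).
have t1 := dist_triangle (u n) l (v n); have t2 := dist_triangle l m (v n).
rewrite (distC m (v n)) in t2; lra.
Qed.

Lemma mcvg_uniq u l l' : mcvg u l -> mcvg u l' -> l = l'.
Proof.
move=> hl hl'; apply: dist_eq0; apply/eqP; rewrite eq_le dist_ge0 andbT.
by apply: (mcvg_dist_le hl hl'); exists 0%N => n _; rewrite distxx.
Qed.

Lemma mclosed_lim F u l : mclosed F -> (forall n, F (u n)) -> mcvg u l -> F l.
Proof.
move=> hF hu hc; apply: contrapT => nFl.
have [r r0 hr] := hF l nFl; have [N HN] := hc r r0.
by apply: (hr (u N)) (hu N); rewrite /= distC; apply: HN.
Qed.

Lemma mclosed_seq F :
  (forall u l, (forall n, F (u n)) -> mcvg u l -> F l) -> mclosed F.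
Proof.
move=> H x nFx; apply: contrapT => hx.
have near_x n : exists y, dist x y < n.+1%:R^-1 /\ F y.
  apply: contrapT => hn; apply: hx; exists n.+1%:R^-1 => // y hy Fy.
  by apply: hn; exists y.
have [u hu] := choice near_x.
apply: nFx; apply: (H u) => [n|e e0]; first by case: (hu n).
have [N HN] := exists_invSn_lt e0; exists N => n Nn.
by rewrite distC; apply: lt_trans (hu n).1 (HN n Nn).
Qed.

End Metric.

Definition rcvg {R : realType} := mcvg (fun x y : R => `|x - y|).

Lemma rcvg_cst (R : realType) (c : R) : rcvg (fun=> c) c.
Proof. by move=> e e0; exists 0%N => n _; rewrite subrr normr0. Qed.

Lemma bounded_subseq_rcvg (R : realType) (r : nat -> R) (S : R) :
  (forall n, -S <= r n <= S) ->
  exists phi, strict_incr phi /\ exists2 r0, -S <= r0 <= S & rcvg (r \o phi) r0.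
Proof.
move=> hr.
have hb : bounded_fun r.
  exists S; split; first exact: num_real.
  move=> M hM x _ /=; have := hr x; rewrite ler_norml => /andP[h1 h2].
  by apply/andP; split; lra.
have [phi hphi hcv] := bolzano_weierstrass hb.
have sp : strict_incr phi.
  by move=> n; rewrite ltnNge; have := hphi n.+1 n; rewrite /= !leEnat => ->; rewrite ltnn.
set r0 := limn (r \o phi).
have rc : rcvg (r \o phi) r0.
  move=> e e0; move/cvgrPdist_lt: hcv => /(_ e e0) [N _ HN]; exists N => n Nn.
  by rewrite distrC; apply: HN.
exists phi; split => //; exists r0 => //.
apply/andP; split; rewrite leNgt; apply/negP => hlt.
- have [N HN] := rc (- S - r0) ltac:(lra).
  have := HN N (leqnn N); have := hr (phi N).
  by rewrite ltr_norml /= => /andP[h1 h2] /andP[h3 h4]; lra.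
- have [N HN] := rc (r0 - S) ltac:(lra).
  have := HN N (leqnn N); have := hr (phi N).
  by rewrite ltr_norml /= => /andP[h1 h2] /andP[h3 h4]; lra.
Qed.

Section Flow.
Context {R : realType} {X : Type} (dist : X -> X -> R) (f : R -> X -> X).

Definition Gamma_le (c : R) (a : X) : set X :=
  [set y | forall t, dist (f t a) (f t y) <= c].

Definition NE_le (s c : R) : set X :=
  [set a | exists y, Gamma_le c a y /\ ~ flow_tube f s [set a] y].

Definition NE_sep (s c d : R) : set X :=
  [set a | exists y, Gamma_le c a y /\
     forall r, -s <= r <= s -> d <= dist y (f r a)].

Definition shadow (K : set X) (c T : R) : set X :=
  [set z | exists a, K a /\ forall r, -T <= r <= T -> dist (f r a) (f r z) <= c].

Definition cells_meeting (P : set (set X)) (t : R) (K : set X) : set (set X) :=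
  [set B | P B /\ exists2 b, B b & K (f t b)].

Lemma NE_le_le s c c' : c <= c' -> NE_le s c `<=` NE_le s c'.
Proof. by move=> cc' a [y [hy hn]]; exists y; split => // t; exact: le_trans (hy t) cc'. Qed.

Lemma shadow_le K c T T' : T <= T' -> shadow K c T' `<=` shadow K c T.
Proof.
move=> TT' z [a [Ka ha]]; exists a; split => // r /andP[h1 h2].
by apply: ha; apply/andP; split; lra.
Qed.

Lemma flow_tube_sub s s' A B :
  s <= s' -> A `<=` B -> flow_tube f s A `<=` flow_tube f s' B.
Proof.
move=> ss' AB y [r [/andP[h1 h2] [a Aa <-]]]; exists r; split.
  by apply/andP; split; lra.
by exists a => //; apply: AB.
Qed.

Hypothesis hm : is_metric dist.
Hypothesis hc : mcompact dist.
Hypothesis hf : is_cont_flow dist f.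

Lemma flow0 x : f 0 x = x. Proof. by case: hf. Qed.
Lemma flowD s t x : f (s + t) x = f s (f t x). Proof. by case: hf => _ []. Qed.

Lemma mcvg_flow (r : nat -> R) r0 (a : nat -> X) a0 :
  rcvg r r0 -> mcvg dist a a0 -> mcvg dist (fun k => f (r k) (a k)) (f r0 a0).
Proof.
move=> hr ha e e0; case: hf => _ [_ /(_ r0 a0 e e0) [del del0 H]].
have [N1 HN1] := hr del del0; have [N2 HN2] := ha del del0.
exists (maxn N1 N2) => n Nn; rewrite distC //; apply: H.
- by apply: HN1; exact: leq_trans (leq_maxl _ _) Nn.
- by rewrite distC //; apply: HN2; exact: leq_trans (leq_maxr _ _) Nn.
Qed.

Lemma mcompact_subseq (u : nat -> X) :
  exists phi, strict_incr phi /\ exists l, mcvg dist (u \o phi) l.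
Proof. by have [phi [h1 [l h2]]] := hc u; exists phi; split => //; exists l. Qed.

Lemma mclosed_flow_tube s K : mclosed dist K -> mclosed dist (flow_tube f s K).
Proof.
move=> hK; apply: mclosed_seq => // u l hu hl.
have [r hr] := choice hu.
have from_K n : exists a, K a /\ f (r n) a = u n.
  by case: (hr n).2 => a ? ?; exists a.
have [a ha] := choice from_K.
have [phi1 [sp1 [r0 hr0 rc]]] := bounded_subseq_rcvg (fun n => (hr n).1).
have [phi2 [sp2 [a0 ac]]] := mcompact_subseq (a \o phi1).
have Ka0 : K a0 by apply: (mclosed_lim hm hK _ ac) => n; case: (ha (phi1 (phi2 n))).
have := mcvg_flow (mcvg_sub rc sp2) ac.
have -> : (fun k => f (((r \o phi1) \o phi2) k) (((a \o phi1) \o phi2) k)) =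
          u \o (phi1 \o phi2).
  by apply/funext => k; case: (ha (phi1 (phi2 k))).
move/(mcvg_uniq hm (mcvg_sub hl (strict_incr_comp sp1 sp2))) => ->.
by exists r0; split => //; exists a0.
Qed.

Lemma mclosed_NE_sep s c d : mclosed dist (NE_sep s c d).
Proof.
apply: mclosed_seq => // u l hu hl.
have [y hy] := choice hu.
have [phi [sp [y0 yc]]] := mcompact_subseq y.
have hl' := mcvg_sub hl sp.
exists y0; split.
- move=> t; apply: (mcvg_dist_le hm (mcvg_flow (rcvg_cst t) hl') (mcvg_flow (rcvg_cst t) yc)).
  by exists 0%N => n _; case: (hy (phi n)) => + _; apply.
- move=> r hr; apply: (mcvg_dist_ge hm yc (mcvg_flow (rcvg_cst r) hl')).
  by exists 0%N => n _; case: (hy (phi n)) => _; apply.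
Qed.

Lemma NE_le_bigcup s c : NE_le s c = \bigcup_m NE_sep s c m.+1%:R^-1.
Proof.
apply/seteqP; split => a.
- move=> [y [hg hnt]]; apply: contrapT => hnot; apply: hnt.
  have near n : exists r, -s <= r <= s /\ dist y (f r a) < n.+1%:R^-1.
    apply: contrapT => hn; apply: hnot; exists n => //; exists y; split => // r hr.
    by rewrite leNgt; apply/negP => hlt; apply: hn; exists r.
  have [r hr] := choice near.
  have [phi [sp [r0 hr0 rc]]] := bounded_subseq_rcvg (fun n => (hr n).1).
  have to_y : mcvg dist (fun k => f ((r \o phi) k) a) y.
    move=> e e0; have [N HN] := exists_invSn_lt e0; exists N => n Nn /=.
    rewrite distC //; apply: lt_trans (hr (phi n)).2 (HN _ _).
    exact: leq_trans Nn (strict_incr_ge sp n).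
  exists r0; split => //; exists a => //.
  by apply: (mcvg_uniq hm _ to_y); exact: mcvg_flow rc (mcvg_cst hm a).
- move=> [m _ [y [hg hd]]]; exists y; split => // [[r [hr [a' /= -> hy]]]].
  by have := hd r hr; rewrite hy distxx // leNgt invr_gt0 ltr0n.
Qed.

Lemma bigcap_NE_le_sub_NE eps s : 0 < eps -> 0 < s ->
  \bigcap_n NE_le s n.+1%:R^-1 `<=` NE dist f eps.
Proof.
move=> eps0 s0 a hB S S0 hsub.
have [N0 HN0] := exists_invSn_lt eps0.
have [y hy] := choice (fun n => hB (n + N0)%N I).
have hG n : Gamma dist f eps a (y n).
  by move=> t; apply: le_lt_trans ((hy n).1 t) (HN0 _ (leq_addl _ _)).
have [r hr] := choice (fun n => hsub _ (hG n)).
have hr1 n : f (r n) a = y n by case: (hr n) => _ [a' /= -> ->].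
have [phi [sp [r0 hr0 rc]]] := bounded_subseq_rcvg (fun n => (hr n).1).
have to_a : mcvg dist (fun k => f ((r \o phi) k) a) a.
  move=> e e0; have [N HN] := exists_invSn_lt e0; exists N => n Nn /=.
  rewrite hr1; have := (hy (phi n)).1 0; rewrite !flow0 distC // => h.
  apply: le_lt_trans h (HN _ _).
  exact: leq_trans Nn (leq_trans (strict_incr_ge sp n) (leq_addr _ _)).
(* [a] is fixed by [f r0], so [y (phi N) = f (r (phi N) - r0) a] with a small time shift. *)
have fixed : f r0 a = a := mcvg_uniq hm (mcvg_flow rc (mcvg_cst hm a)) to_a.
have [N HN] := rc s s0.
apply: (hy (phi N)).2; exists (r (phi N) - r0); split.
  by have := HN N (leqnn N); rewrite ltr_norml /= => /andP[h1 h2]; apply/andP; split; lra.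
by exists a => //; rewrite -{1}fixed -flowD subrK hr1.
Qed.

Lemma mclosed_shadow K c T : mclosed dist K -> mclosed dist (shadow K c T).
Proof.
move=> hK; apply: mclosed_seq => // u l hu hl.
have [a ha] := choice hu.
have [phi [sp [a0 ac]]] := mcompact_subseq a.
exists a0; split; first by apply: (mclosed_lim hm hK _ ac) => n; case: (ha (phi n)).
move=> r hr.
apply: (mcvg_dist_le hm (mcvg_flow (rcvg_cst r) ac) (mcvg_flow (rcvg_cst r) (mcvg_sub hl sp))).
by exists 0%N => n _; case: (ha (phi n)) => _; apply.
Qed.

Lemma bigcap_shadow_sub_flow_tube K c s : mclosed dist K ->
  K `&` NE_le s c = set0 -> \bigcap_N shadow K c N%:R `<=` flow_tube f s K.
Proof.
move=> hK KNE z hz.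
have [a ha] := choice (fun N => hz N I).
have [phi [sp [a0 ac]]] := mcompact_subseq a.
have Ka0 : K a0 by apply: (mclosed_lim hm hK _ ac) => n; case: (ha (phi n)).
have hg : Gamma_le c a0 z.
  move=> t; apply: (mcvg_dist_le hm (mcvg_flow (rcvg_cst t) ac) (mcvg_cst hm (f t z))).
  exists (Num.truncn `|t|).+1 => n Nn; apply: (ha (phi n)).2.
  have h1 : (Num.truncn `|t|).+1%:R <= (phi n)%:R :> R.
    by rewrite ler_nat; apply: leq_trans Nn (strict_incr_ge sp n).
  have h2 := truncnS_gt `|t|.
  have /andP[h3 h4] : - `|t| <= t <= `|t| by rewrite -ler_norml lexx.
  by apply/andP; split; lra.
have : flow_tube f s [set a0] z.
  apply: contrapT => hn.
  have : (K `&` NE_le s c) a0 by split => //; exists z.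
  by rewrite KNE.
by case=> r [hr [a' /= -> <-]]; exists r; split => //; exists a0.
Qed.

Lemma image_cells_meeting_sub_shadow (P : set (set X)) t rho K : 0 <= t ->
  (forall B, P B -> exists x, B `<=` cbowen dist f t rho x) ->
  f (t / 2) @` (\bigcup_(B in cells_meeting P (t / 2) K) B) `<=`
    shadow K (2 * rho) (t / 2).
Proof.
move=> t0 hP _ [u [B [PB [b Bb Kb]] uB] <-].
have [x hx] := hP B PB.
exists (f (t / 2) b); split => // r /andP[h1 h2]; rewrite -!flowD.
have hr : 0 <= r + t / 2 <= t by apply/andP; split; lra.
have := dist_triangle hm (f (r + t / 2) b) (f (r + t / 2) x) (f (r + t / 2) u).
have := hx b Bb _ hr; have := hx u uB _ hr.
rewrite (distC hm (f _ x) (f _ b)); lra.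
Qed.

Lemma image_cells_meeting_subD (P : set (set X)) t rho K A s s' T :
  0 <= t -> T <= t / 2 -> s <= s' -> K `<=` A ->
  (forall B, P B -> exists x, B `<=` cbowen dist f t rho x) ->
  f (t / 2) @` (\bigcup_(B in cells_meeting P (t / 2) K) B) `\` flow_tube f s' A `<=`
    shadow K (2 * rho) T `\` flow_tube f s K.
Proof.
move=> t0 Tt ss' KA hP z [/(image_cells_meeting_sub_shadow t0 hP) Kz nA]; split.
  exact: shadow_le Kz.
by move=> Kz_tube; apply: nA; exact: flow_tube_sub Kz_tube.
Qed.

Lemma setD_image_cells_meeting (P : set (set X)) t K A :
  \bigcup_(B in P) B = setT ->
  A `\` f t @` (\bigcup_(B in cells_meeting P t K) B) `<=` A `\` K.
Proof.
move=> covP a [Aa nU]; split => // Ka; apply: nU.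
have back : f t (f (- t) a) = a by rewrite -flowD subrr flow0.
have : (\bigcup_(B in P) B) (f (- t) a) by rewrite covP.
case=> B PB hB; exists (f (- t) a) => //; exists B => //; split => //.
by exists (f (- t) a); rewrite ?back.
Qed.

End Flow.

Section Measure.
Context {R : realType} {disp : measure_display} {X : measurableType disp}.
Variable mu : {finite_measure set X -> \bar R}.

Lemma le_mu (A B : set X) :
  measurable A -> measurable B -> A `<=` B -> (mu A <= mu B)%E.
Proof. by move=> mA mB AB; apply: le_measure => //; rewrite inE. Qed.

Lemma nonincreasing_null_lt (F : nat -> set X) : (forall i, measurable (F i)) ->
  (forall n m, (n <= m)%N -> F m `<=` F n) -> mu (\bigcap_n F n) = 0%E ->
  forall d : R, 0 < d -> exists n, (mu (F n) < d%:E)%E.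
Proof.
move=> mF ni h0 d d0.
have F0_fin : (mu (F 0%N) < +oo)%E.
  by rewrite -ge0_fin_numE ?measure_ge0 //; exact: fin_num_measure.
have ni' : nonincreasing_seq F by move=> n m nm; rewrite subsetEset; apply: ni.
have : mu \o F @ \oo --> 0%E.
  rewrite -h0; apply: nonincreasing_cvg_mu => //.
  exact: (bigcap_measurable (ex_intro _ 0%N I)).
move=> /fine_cvgP [[N1 _ H1] /cvgrPdist_lt].
move=> /(_ d d0) [N2 _ H2]; exists (maxn N1 N2).
have /= f1 := H1 (maxn N1 N2) (leq_maxl _ _).
have := H2 (maxn N1 N2) (leq_maxr _ _).
rewrite /= -(fineK f1) lte_fin sub0r normrN => f2.
exact: le_lt_trans (ler_norm _) f2.
Qed.

Lemma measure_bigcup_geometric_le (D : nat -> set X) (e : R) : 0 <= e ->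
  (forall i, measurable (D i)) ->
  (forall i, (mu (D i) <= (e / (2 ^ i.+1)%:R)%:E)%E) -> (mu (\bigcup_i D i) <= e%:E)%E.
Proof.
move=> e0 mD hD.
apply: le_trans (measure_sigma_subadditive mu mD
  (bigcup_measurable (fun i _ => mD i)) (@subset_refl _ (\bigcup_i D i))) _.
apply: (@le_trans _ _ (\sum_(i <oo) (0%E + (e / (2 ^ i.+1)%:R)%:E))%E).
  by apply: lee_nneseries => [i _ _|i _]; [exact: measure_ge0|rewrite add0e; exact: hD].
apply: le_trans (epsilon_trick (A := fun _ : nat => 0%E) _ (fun _ => lexx _) e0) _.
by rewrite eseries0 ?add0e.
Qed.

Variable dist : X -> X -> R.
Hypothesis hm : is_metric dist.

Definition inner_mclosed (M : set X) := forall d : R, 0 < d ->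
  exists F, [/\ mclosed dist F, F `<=` M & (mu (M `\` F) < d%:E)%E].

Definition closed_regular (M : set X) :=
  [/\ measurable M, inner_mclosed M & inner_mclosed (~` M)].

Lemma mclosed_inner_mclosed F : mclosed dist F -> inner_mclosed F.
Proof. by move=> hF d d0; exists F; split; rewrite // setDv measure0 lte_fin. Qed.

Hypothesis hmeas : @measurable disp X = <<s mopen dist >>.

Lemma mopen_measurable O : mopen dist O -> measurable O.
Proof. by move=> hO; rewrite hmeas; apply: sub_sigma_algebra. Qed.

Lemma mclosed_measurable F : mclosed dist F -> measurable F.
Proof. by move=> hF; rewrite -(setCK F); apply: measurableC; apply: mopen_measurable. Qed.

Lemma inner_mclosed_bigcup (A : nat -> set X) : (forall i, measurable (A i)) ->
  (forall i, inner_mclosed (A i)) -> inner_mclosed (\bigcup_i A i).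
Proof.
move=> mA hA d d0.
pose G n := \bigcup_i A i `\` \bigcup_(i < n) A i.
have mG n : measurable (G n) by apply: measurableD; apply: bigcup_measurable => i _.
have [n0 Hn0] : exists n, (mu (G n) < (d / 2)%:E)%E.
  apply: nonincreasing_null_lt => //; last by lra.
  - move=> n m nm x [hx1 hx2]; split => // [[i /= hi Ax]]; apply: hx2.
    by exists i => //=; exact: leq_trans hi nm.
  - suff -> : \bigcap_n G n = set0 by rewrite measure0.
    apply/seteqP; split => // x hx; have [[i _ hi] _] := hx 0%N I.
    by case: (hx i.+1 I) => _; apply; exists i => /=.
have pos i : 0 < d / 4 / (2 ^ i.+1)%:R.
  by apply: divr_gt0; [lra | rewrite ltr0n expn_gt0].
have [F hF] := choice (fun i => hA i _ (pos i)).
have mF i : measurable (F i) by apply: mclosed_measurable; case: (hF i).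
have mD i : measurable (A i `\` F i) by apply: measurableD.
exists (\bigcup_(i < n0) F i); split.
- by apply: mclosed_bigcup_ord => i; case: (hF i).
- by move=> x [i _ Fx]; exists i => //; case: (hF i) => _ /(_ x Fx).
have sub : \bigcup_i A i `\` \bigcup_(i < n0) F i `<=` G n0 `|` \bigcup_i (A i `\` F i).
  move=> x [[i _ hi] hx]; have [[j hj Ajx]|hn] := pselect ((\bigcup_(i < n0) A i) x).
    by right; exists j => //; split => // Fjx; apply: hx; exists j.
  by left; split => //; exists i.
apply: le_lt_trans (le_mu _ _ sub) _.
- by apply: measurableD; apply: bigcup_measurable.
- by apply: measurableU => //; apply: bigcup_measurable => i _.
apply: le_lt_trans (measureU2 _ _ _) _ => //; first by apply: bigcup_measurable => i _.
have hF3 i : (mu (A i `\` F i) <= (d / 4 / (2 ^ i.+1)%:R)%:E)%E.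
  by case: (hF i) => _ _ /ltW.
have h2 := measure_bigcup_geometric_le (e := d / 4) ltac:(lra) mD hF3.
have h3 : ((d / 4)%:E < (d / 2)%:E)%E by rewrite lte_fin; lra.
apply: lt_le_trans (lteD Hn0 (le_lt_trans h2 h3)) _.
by rewrite -EFinD lee_fin; lra.
Qed.

Lemma inner_mclosed_bigcap (A : nat -> set X) : (forall i, measurable (A i)) ->
  (forall i, inner_mclosed (A i)) -> inner_mclosed (\bigcap_i A i).
Proof.
move=> mA hA d d0.
have pos i : 0 < d / 2 / (2 ^ i.+1)%:R.
  by apply: divr_gt0; [lra | rewrite ltr0n expn_gt0].
have [F hF] := choice (fun i => hA i _ (pos i)).
have mF i : measurable (F i) by apply: mclosed_measurable; case: (hF i).
have mD i : measurable (A i `\` F i) by apply: measurableD.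
exists (\bigcap_i F i); split.
- by apply: mclosed_bigcap => i; case: (hF i).
- by move=> x hx i _; case: (hF i) => _ /(_ x (hx i I)).
have sub : \bigcap_i A i `\` \bigcap_i F i `<=` \bigcup_i (A i `\` F i).
  move=> x [hx1 hx2]; apply: contrapT => hn; apply: hx2 => i _.
  by apply: contrapT => nF; apply: hn; exists i => //; split => //; exact: hx1 i I.
apply: le_lt_trans (le_mu _ _ sub) _.
- by apply: measurableD; apply: bigcap_measurable.
- by apply: bigcup_measurable => i _.
have hF3 i : (mu (A i `\` F i) <= (d / 2 / (2 ^ i.+1)%:R)%:E)%E.
  by case: (hF i) => _ _ /ltW.
apply: le_lt_trans (measure_bigcup_geometric_le (e := d / 2) ltac:(lra) mD hF3) _.
by rewrite lte_fin; lra.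
Qed.

Lemma closed_regular_sigma : sigma_algebra setT closed_regular.
Proof.
have mclosed_set0 : mclosed dist set0 by move=> x _; exists 1 => // y _ [].
have mclosed_setT : mclosed dist setT by move=> x [].
split.
- split; [exact: measurable0 | exact: mclosed_inner_mclosed |].
  by rewrite setC0; exact: mclosed_inner_mclosed.
- move=> A [mA hA hAc]; rewrite setTD; split => //; first exact: measurableC.
  by rewrite setCK.
- move=> A hA; have mA i : measurable (A i) by case: (hA i).
  split; first by apply: bigcup_measurable.
  + by apply: inner_mclosed_bigcup => // i; case: (hA i).
  + rewrite setC_bigcup; apply: inner_mclosed_bigcap => i.
    * exact: measurableC.
    * by case: (hA i).
Qed.

Lemma mopen_closed_regular O : mopen dist O -> closed_regular O.
Proof.
move=> hO; split; first exact: mopen_measurable; last first.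
  by apply: mclosed_inner_mclosed; rewrite /mclosed setCK.
pose F k := [set x | forall y, dist x y < k.+1%:R^-1 -> O y].
have cF k : mclosed dist (F k).
  move=> x /= hx.
  have [y [hy nOy]] : exists y, dist x y < k.+1%:R^-1 /\ ~ O y.
    apply: contrapT => hn; apply: hx => y hy; apply: contrapT => h; apply: hn; exists y.
    by split.
  exists (k.+1%:R^-1 - dist x y); first by rewrite subr_gt0.
  move=> z /= hz hFz; apply: nOy; apply: hFz.
  have := dist_triangle hm z x y; rewrite (distC hm z x).
  by move: hz hy; move: (k.+1%:R^-1) => q; lra.
have FO k : F k `<=` O by move=> x hx; apply: hx; rewrite distxx // invr_gt0 ltr0n.
move=> d d0; have [n Hn] : exists n, (mu (O `\` F n) < d%:E)%E.
  apply: nonincreasing_null_lt => //.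
  + by move=> n; apply: measurableD; [exact: mopen_measurable | exact: mclosed_measurable].
  + move=> n m nm x [hx1 hx2]; split => // hx3; apply: hx2 => y hy; apply: hx3.
    apply: lt_le_trans hy _; rewrite lef_pV2 ?posrE ?ltr0n // ler_nat ltnS //.
  + suff -> : \bigcap_n (O `\` F n) = set0 by rewrite measure0.
    apply/seteqP; split => // x hx; have [hx1 _] := hx 0%N I.
    have [r r0 hr] := hO x hx1; have [N HN] := exists_invSn_lt r0.
    case: (hx N I) => _; apply => y hy; apply: hr; apply: lt_trans hy (HN N (leqnn N)).
by exists (F n); split.
Qed.

Lemma inner_regular M : measurable M -> inner_mclosed M.
Proof.
rewrite hmeas => mM.
suff [] : closed_regular M by [].
exact: (smallest_sub closed_regular_sigma mopen_closed_regular) mM.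
Qed.

End Measure.

Section FlowMeasure.
Context {R : realType} {disp : measure_display} {X : measurableType disp}.
Variables (dist : X -> X -> R) (f : R -> X -> X).
Variable mu : {finite_measure set X -> \bar R}.
Hypotheses (hm : is_metric dist) (hc : mcompact dist) (hf : is_cont_flow dist f).
Hypothesis hmeas : @measurable disp X = <<s mopen dist >>.

Lemma measurable_NE_le s c : measurable (NE_le dist f s c).
Proof.
rewrite (NE_le_bigcup hm hf); apply: bigcup_measurable => m _.
apply: (mclosed_measurable hmeas); exact: mclosed_NE_sep.
Qed.

Lemma measurable_shadowD K c T s : mclosed dist K ->
  measurable (shadow dist f K c T `\` flow_tube f s K).
Proof.
move=> hK; apply: measurableD; apply: (mclosed_measurable hmeas).
- exact: mclosed_shadow.
- exact: mclosed_flow_tube.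
Qed.

Lemma exists_NE_le_lt eps s d : 0 < eps -> 0 < s ->
  negligible mu (NE dist f eps) -> 0 < d ->
  exists n, (mu (NE_le dist f s n.+1%:R^-1) < d%:E)%E.
Proof.
move=> eps0 s0 [N [mN muN0 NEN]] d0.
apply: nonincreasing_null_lt => // [n|n m nm|]; first exact: measurable_NE_le.
  by apply: NE_le_le; rewrite lef_pV2 ?posrE ?ltr0n // ler_nat ltnS.
apply/eqP; rewrite eq_le measure_ge0 andbT -muN0; apply: le_mu => //.
  by apply: (bigcap_measurable (ex_intro _ 0%N I)) => n _; exact: measurable_NE_le.
by move=> x hx; apply: NEN; exact: bigcap_NE_le_sub_NE hx.
Qed.

Lemma exists_shadowD_lt K s c d : mclosed dist K ->
  K `&` NE_le dist f s c = set0 -> 0 < d ->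
  exists N : nat, (mu (shadow dist f K c N%:R `\` flow_tube f s K) < d%:E)%E.
Proof.
move=> hK KNE d0; apply: nonincreasing_null_lt => // [N|n m nm|].
- exact: measurable_shadowD.
- by move=> z [hz nt]; split => //; apply: shadow_le hz; rewrite ler_nat.
- suff -> : \bigcap_N (shadow dist f K c N%:R `\` flow_tube f s K) = set0.
    by rewrite measure0.
  apply/seteqP; split => // z hz; have [_] := hz 0%N I; apply.
  by apply: (bigcap_shadow_sub_flow_tube hm hc hf hK KNE) => N _; case: (hz N I).
Qed.

End FlowMeasure.
Unset Implicit Arguments.

Theorem proposition4p1 (R : realType) (disp : measure_display)
  (X : measurableType disp) (dist : X -> X -> R) (f : R -> X -> X)
  (nu : probability X R) (eps s alpha : R) :
  is_metric dist -> mcompact dist ->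
  @measurable disp X = <<s mopen dist >> ->
  is_cont_flow dist f ->
  (forall (t : R) (A : set X), measurable A -> nu (f t @^-1` A) = nu A) ->
  0 < eps -> negligible nu (NE dist f eps) ->
  0 < s -> 0 < alpha ->
  exists2 rho0 : R, 0 < rho0 &
  forall rho : R, 0 < rho -> rho < rho0 -> rho < eps / 2 ->
  forall (E : R -> set X) (P : R -> set (set X)),
    (forall t : R, 0 < t ->
       max_separated dist f t rho (E t) /\ adapted dist f t rho (E t) (P t)) ->
  forall A : set X, measurable A -> (0 < nu A)%E ->
  forall kappa : R, 0 < kappa ->
  exists2 t0 : R, 0 < t0 &
  forall t : R, t0 <= t ->
  exists2 Q : set (set X), Q `<=` P t &
    let U := \bigcup_(B in Q) B in
    outer_lt nu (f (t / 2) @` U `\` flow_tube f (3 * s) A) kappa /\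
    outer_lt nu (A `\` f (t / 2) @` U) alpha.
Proof.
move=> hm hc hmeas hf _ eps0 hNE s0 alpha0.
have alpha2 : 0 < alpha / 2 by lra.
have [n hn] := exists_NE_le_lt hm hc hf hmeas eps0 s0 hNE alpha2.
set c := n.+1%:R^-1 in hn *.
have c0 : 0 < c by rewrite invr_gt0 ltr0n.
exists (c / 2) => [|rho rho0 rho_c _ E P hEP A mA _ kappa kappa0]; first lra.
have mNE : measurable (NE_le dist f s c) := measurable_NE_le hm hc hf hmeas s c.
have [K [cK KA hK]] :=
  inner_regular nu hm hmeas (measurableD mA mNE) alpha2.
have mK : measurable K := mclosed_measurable hmeas cK.
have KNE : K `&` NE_le dist f s (2 * rho) = set0.
  apply/seteqP; split => // a [/KA [_ nNE] NE2a]; apply: nNE.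
  by apply: NE_le_le NE2a; lra.
have [N hN] := exists_shadowD_lt nu hm hc hf hmeas cK KNE kappa0.
have N0 : (0 : R) <= N%:R by rewrite ler0n.
exists (2 * N%:R + 1) => [|t ht]; first lra.
have t0 : 0 < t by lra.
have [_ [[_ [_ covP]] adP]] := hEP t t0.
have cells_bowen B : P t B -> exists x, B `<=` cbowen dist f t rho x.
  by move=> /adP [x _ [_ Bx]]; exists x.
exists (cells_meeting f (P t) (t / 2) K) => [B []//|]; split.
- exists (shadow dist f K (2 * rho) N%:R `\` flow_tube f s K).
  split; [exact: measurable_shadowD | | exact: hN].
  apply: (image_cells_meeting_subD hm hf (ltW t0)) cells_bowen; [lra | lra |].
  by move=> a /KA [].
- exists (NE_le dist f s c `|` (A `\` NE_le dist f s c `\` K)); split.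
  + by apply: measurableU => //; do 2 apply: measurableD => //.
  + move=> a /(setD_image_cells_meeting hf covP (A := A)) [Aa nKa].
    by have [|] := pselect (NE_le dist f s c a); [left | right].
  + apply: le_lt_trans (measureU2 _ _ _) _ => //; first by do 2 apply: measurableD => //.
    by rewrite [alpha]splitr EFinD; exact: lteD hn hK.
Qed.
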